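(* Let $\Sigma$ be a graded alphabet, $t\in T_\Sigma$, and $A_t=(\Sigma,Q,\nu,\delta)$ the subtree automaton of $t$. Then for every tree $r\in\mathrm{SubTree}(t)$, $\Delta(r)=\{r'\in Q\mid\mathrm{h}(r')=r\}$.
   Context: A graded alphabet is a finite set $\Sigma=\bigcup_{k\in\mathbb{N}}\Sigma_k$; $T_\Sigma$ is the set of trees $f(t_1,\ldots,t_k)$ with $f\in\Sigma_k$. A RWTA is $A=(\Sigma,Q,\nu,\delta)$ with $Q$ finite, $\nu:Q\to\mathbb{N}$, $\delta\subseteq\bigcup_k Q\times\Sigma_k\times Q^k$; $\delta(f,q_1,\ldots,q_k)=\{q\mid(q,f,q_1,\ldots,q_k)\in\delta\}$, extended to subsets by union over tuples; $\Delta(f(t_1,\ldots,t_k))=\delta(f,\Delta(t_1),\ldots,\Delta(t_k))$. For $t=f(t_1,\ldots,t_k)$, $\mathrm{SubTree}(t)=\{t\}\cup\bigcup_j\mathrm{SubTree}(t_j)$. The tree $t^\sharp$ is obtained from $t$ by indexing each symbol occurrence with its position in a preorder traversal (indexed symbols are distinct and keep their arity); $\Sigma_{t^\sharp}$ is the set of indexed symbols of $t^\sharp$; $\mathrm{h}$ erases indices (on symbols and trees). The subtree automaton of $t$ is $A_t=(\Sigma,Q,\nu,\delta)$ with $Q=\mathrm{SubTree}(t^\sharp)$, $\nu\equiv1$, and for $f\in\Sigma_{t^\sharp}$ of arity $k$ and $t_1,\ldots,t_{k+1}\in Q$: $t_{k+1}\in\delta(\mathrm{h}(f),t_1,\ldots,t_k)$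 iff $t_{k+1}=f(t_1,\ldots,t_k)$. *)

From mathcomp Require Import all_boot.
Set Implicit Arguments.
Unset Strict Implicit.
Unset Printing Implicit Defensive.

Inductive tree (L : Type) : Type := Node : L -> list (tree L) -> tree L.
Arguments Node {L} _ _.

(** A graded alphabet: a finite set of symbols with an arity function
    (Sigma_k = symbols of arity k). *)
Record graded_alphabet := GradedAlphabet {
  sym :> finType;
  arity : sym -> nat
}.

Fixpoint ranked (L : Type) (ar : L -> nat) (t : tree L) : Prop :=
  match t with
  | Node f ts =>
      length ts = ar f /\
      (fix R (us : list (tree L)) : Prop :=
         match us with
         | nil => True
         | u :: us' => ranked ar u /\ R us'
         end) ts
  end.

Definition in_TSigma (S : graded_alphabet) (t : tree S) : Prop := ranked (@arity S) t.

Fixpoint is_subtree (L : Type) (r t : tree L) : Prop :=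
  match t with
  | Node f ts =>
      r = t \/
      (fix R (us : list (tree L)) : Prop :=
         match us with
         | nil => False
         | u :: us' => is_subtree r u \/ R us'
         end) ts
  end.

Fixpoint tmap (A B : Type) (g : A -> B) (t : tree A) : tree B :=
  match t with
  | Node a ts =>
      Node (g a)
        ((fix M (us : list (tree A)) : list (tree B) :=
            match us with
            | nil => nil
            | u :: us' => tmap g u :: M us'
            end) ts)
  end.

(** Indexed symbols are pairs (f, i), i = preorder position. *)
Definition erase_sym (S : Type) (x : S * nat) : S := x.1.
Definition erase (S : Type) (t : tree (S * nat)) : tree S := tmap (@erase_sym S) t.

Fixpoint index_from (S : Type) (n : nat) (t : tree S) : tree (S * nat) * nat :=
  match t with
  | Node f ts =>
      let '(ts', m) :=
        (fix G (k : nat) (us : list (tree S)) : list (tree (S * nat)) * nat :=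
           match us with
           | nil => (nil, k)
           | u :: us' =>
               let '(u', k1) := index_from k u in
               let '(us'', k2) := G k1 us' in
               (u' :: us'', k2)
           end) n.+1 ts in
      (Node (f, n) ts', m)
  end.

Definition sharp (S : Type) (t : tree S) : tree (S * nat) := (index_from 1 t).1.

(** Occurrence of a label in a tree (Sigma_{t^#} = labels occurring in t^#). *)
Fixpoint occurs (L : Type) (x : L) (t : tree L) : Prop :=
  match t with
  | Node f ts =>
      x = f \/
      (fix R (us : list (tree L)) : Prop :=
         match us with
         | nil => False
         | u :: us' => occurs x u \/ R us'
         end) ts
  end.

(** Generic RWTA run: Delta(f(t_1..t_k)) = delta(f, Delta(t_1), ..., Delta(t_k)),
    where delta q f qs means (q, f, q_1, ..., q_k) ∈ delta.  Sets of states are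
    predicates on the state type. *)
Fixpoint Delta (L Q : Type) (delta : Q -> L -> list Q -> Prop) (t : tree L) : Q -> Prop :=
  match t with
  | Node f ts =>
      fun q => exists qs : list Q,
        delta q f qs /\
        (fix R (us : list (tree L)) (ps : list Q) : Prop :=
           match us, ps with
           | nil, nil => True
           | u :: us', p :: ps' => Delta delta u p /\ R us' ps'
           | _, _ => False
           end) ts qs
  end.

(** The subtree automaton A_t: states Q = SubTree(t^#) (indexed trees),
    nu = 1 (weights play no role in Delta), and
    t_{k+1} ∈ delta(h(f), t_1..t_k)  iff  f ∈ Sigma_{t^#} of arity k and
    t_{k+1} = f(t_1,..,t_k), with all t_i ∈ Q. *)
Definition subtree_states (S : graded_alphabet) (t : tree S) (q : tree (S * nat)) : Prop :=
  is_subtree q (sharp t).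

Definition subtree_nu (S : graded_alphabet) (t : tree S) (q : tree (S * nat)) : nat := 1.

Definition subtree_delta (S : graded_alphabet) (t : tree S)
    (q : tree (S * nat)) (g : S) (qs : list (tree (S * nat))) : Prop :=
  subtree_states t q /\ (forall i, i < length qs -> subtree_states t (nth (sharp t) qs i)) /\
  exists f : S * nat,
    occurs f (sharp t) /\ arity f.1 = length qs /\
    erase_sym f = g /\ q = Node f qs.

From Stdlib Require Import List.
From mathcomp Require Import all_boot.

(* Each state q of A_t is a node f(q_1,...,q_k) of t^# whose children are again
   states; since t is ranked, so is h(q), hence f has arity k and the single
   transition q ∈ δ(h(f), q_1, ..., q_k) exists.  By induction on the input
   tree, Δ(r) therefore consists of exactly the states erasing to r: a run can
   only build the state f(q_1,...,q_k) from runs q_i on the children, and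
   conversely every state q is reached on h(q) by following its own shape. *)

Section ListFacts.
Context {A B : Type}.

Lemma fold_right_or_In (P : A -> Prop) (l : list A) :
  fold_right (fun x acc => P x \/ acc) False l <-> exists2 x, In x l & P x.
Proof.
elim: l => [|x l IHl] /=; first by split=> [[] | [y []]].
split=> [[Px | /IHl [y ly Py]] | [y [<- | ly] Py]].
- by exists x; first left.
- by exists y; first right.
- by left.
- by right; apply/IHl; exists y.
Qed.

Lemma fold_right_and_In (P : A -> Prop) (l : list A) :
  fold_right (fun x acc => P x /\ acc) True l <-> forall x, In x l -> P x.
Proof.
elim: l => [|x l IHl] //=.
split=> [[Px /IHl Pl] y [<- | ly] | Pl]; [by [] | exact: Pl | ].
by split; [apply: Pl; left | apply/IHl => y ly; apply: Pl; right].
Qed.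

Lemma In_nth (d : A) (l : list A) i : i < length l -> In (nth d l i) l.
Proof. by elim: l i => [|x l IHl] [|i] //= ilt; [left | right; apply: IHl]. Qed.

Lemma Forall2_map_diag (R : A -> B -> Prop) (g : B -> A) (l : list B) :
  (forall y, In y l -> R (g y) y) -> Forall2 R (map g l) l.
Proof.
elim: l => [|y l IHl] Rl /=; constructor; first by apply: Rl; left.
by apply: IHl => z lz; apply: Rl; right.
Qed.

Lemma Forall2_map_eq (R : A -> B -> Prop) (g : B -> A) l1 l2 :
  Forall2 R l1 l2 -> (forall x y, In x l1 -> R x y -> g y = x) -> map g l2 = l1.
Proof.
elim=> //= x y l1' l2' Rxy _ IHl gR; congr cons.
- by apply: gR => //; left.
- by apply: IHl => x' y' l1x'; apply: gR; right.
Qed.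

End ListFacts.

Section Trees.
Variable L : Type.
Implicit Types (t r s u : tree L) (ts : list (tree L)).

Lemma tree_ind_in (P : tree L -> Prop) :
  (forall f ts, (forall u, In u ts -> P u) -> P (Node f ts)) -> forall t, P t.
Proof.
move=> IHnode; fix IH 1 => -[f ts]; apply: IHnode.
elim: ts => [|u us IHus] v /=; first by case.
by case=> [<- | vus]; [exact: IH | exact: IHus].
Qed.

Lemma is_subtree_nodeE r f ts :
  is_subtree r (Node f ts) <-> r = Node f ts \/ exists2 u, In u ts & is_subtree r u.
Proof. exact (or_iff_compat_l _ (fold_right_or_In (is_subtree r) ts)). Qed.

Lemma occurs_nodeE x f ts :
  occurs x (Node f ts) <-> x = f \/ exists2 u, In u ts & occurs x u.
Proof. exact (or_iff_compat_l _ (fold_right_or_In (occurs x) ts)). Qed.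

Lemma ranked_nodeE (ar : L -> nat) f ts :
  ranked ar (Node f ts) <-> length ts = ar f /\ forall u, In u ts -> ranked ar u.
Proof. exact (and_iff_compat_l _ (fold_right_and_In (ranked ar) ts)). Qed.

Lemma subtree_refl t : is_subtree t t.
Proof. by case: t => f ts; apply/is_subtree_nodeE; left. Qed.

Lemma subtree_child u f ts : In u ts -> is_subtree u (Node f ts).
Proof. by move=> uts; apply/is_subtree_nodeE; right; exists u; last exact: subtree_refl. Qed.

Lemma subtree_trans r s t : is_subtree r s -> is_subtree s t -> is_subtree r t.
Proof.
move=> rs; elim/tree_ind_in: t => f ts IH /is_subtree_nodeE [<- // | [u uts su]].
by apply/is_subtree_nodeE; right; exists u; last exact: IH.
Qed.

Lemma ranked_subtree (ar : L -> nat) r t : ranked ar t -> is_subtree r t -> ranked ar r.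
Proof.
elim/tree_ind_in: t => f ts IH rk_t /is_subtree_nodeE [-> // | [u uts ru]].
by case/ranked_nodeE: rk_t => _ rk_ts; apply: IH (rk_ts u uts) ru.
Qed.

Lemma occurs_subtree_root x ts t : is_subtree (Node x ts) t -> occurs x t.
Proof.
elim/tree_ind_in: t => f us IH /is_subtree_nodeE [[-> _] | [u uus xu]].
- by apply/occurs_nodeE; left.
- by apply/occurs_nodeE; right; exists u; last exact: IH.
Qed.

Lemma Delta_nodeE (Q : Type) (d : Q -> L -> list Q -> Prop) f ts q :
  Delta d (Node f ts) q <-> exists qs, d q f qs /\ Forall2 (Delta d) ts qs.
Proof.
split=> -[qs [dq runs]]; exists qs; split=> //.
- by elim: ts qs runs {dq} => [|u us IHus] [|p ps] //= [up /IHus]; constructor.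
- by elim: runs {dq} => //= u p us ps up _ IHus.
Qed.

End Trees.

Lemma tmap_node (A B : Type) (g : A -> B) a ts :
  tmap g (Node a ts) = Node (g a) (map (tmap g) ts).
Proof. by []. Qed.

Lemma tmap_subtree (A B : Type) (g : A -> B) r t :
  is_subtree r t -> is_subtree (tmap g r) (tmap g t).
Proof.
elim/tree_ind_in: t => f ts IH /is_subtree_nodeE [-> | [u uts ru]].
  exact: subtree_refl.
apply: subtree_trans (IH u uts ru) _; rewrite tmap_node.
exact/subtree_child/in_map.
Qed.

Section Indexing.
Context {S : Type}.

Fixpoint index_list (k : nat) (us : list (tree S)) : list (tree (S * nat)) * nat :=
  match us with
  | nil => (nil, k)
  | u :: us' =>
      let '(u', k1) := index_from k u in
      let '(us'', k2) := index_list k1 us' in (u' :: us'', k2)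
  end.

Lemma index_from_node f ts n :
  index_from n (Node f ts) = let '(ts', m) := index_list n.+1 ts in (Node (f, n) ts', m).
Proof. by []. Qed.

Lemma erase_node (f : S * nat) qs : erase (Node f qs) = Node f.1 (map (@erase S) qs).
Proof. by []. Qed.

Lemma erase_index_from (t : tree S) n : erase (index_from n t).1 = t.
Proof.
elim/tree_ind_in: t n => f ts IH n; rewrite index_from_node.
have erase_list k : map (@erase S) (index_list k ts).1 = ts.
  elim: ts IH k => [|u us IHus] //= IH k.
  case Eu: (index_from k u) => [u' k1]; case Eus: (index_list k1 us) => [us' k2] /=.
  have := IH u (or_introl erefl) k; rewrite Eu /= => ->.
  by rewrite -(IHus (fun w wus => IH w (or_intror wus)) k1) Eus.
by case E: (index_list n.+1 ts) => [ts' m]; rewrite erase_node -(erase_list n.+1) E.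
Qed.

Lemma erase_sharp (t : tree S) : erase (sharp t) = t.
Proof. exact: erase_index_from. Qed.

End Indexing.

Section SubtreeAutomaton.
Variables (S : graded_alphabet) (t : tree S).

Lemma subtree_states_child {f qs q} :
  subtree_states t (Node f qs) -> In q qs -> subtree_states t q.
Proof. by move=> st_fqs qqs; apply: subtree_trans st_fqs; apply: subtree_child. Qed.

Lemma ranked_erase_state {q} :
  in_TSigma t -> subtree_states t q -> ranked (@arity S) (erase q).
Proof.
move=> t_ranked st_q; apply: ranked_subtree t_ranked _.
by rewrite -(erase_sharp t); apply: tmap_subtree.
Qed.

Lemma subtree_delta_state f qs :
  in_TSigma t -> subtree_states t (Node f qs) -> subtree_delta t (Node f qs) f.1 qs.
Proof.
move=> t_ranked st_fqs; split=> //; split.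
  by move=> i ilt; apply: subtree_states_child st_fqs _; apply: In_nth.
exists f; split; first exact: occurs_subtree_root st_fqs.
split=> //; have := ranked_erase_state t_ranked st_fqs.
by rewrite erase_node => /ranked_nodeE [<- _]; apply: size_map.
Qed.

Lemma Delta_erase_state q :
  in_TSigma t -> subtree_states t q -> Delta (subtree_delta t) (erase q) q.
Proof.
move=> t_ranked; elim/tree_ind_in: q => f qs IH st_fqs.
rewrite erase_node; apply/Delta_nodeE; exists qs.
split; first exact: subtree_delta_state.
apply: Forall2_map_diag => p pqs.
exact: IH p pqs (subtree_states_child st_fqs pqs).
Qed.

Lemma Delta_state_erase r q :
  Delta (subtree_delta t) r q -> subtree_states t q /\ erase q = r.
Proof.
elim/tree_ind_in: r q => g ts IH q.
case/Delta_nodeE => qs [[st_q [_ [f [_ [_ [<- q_def]]]]]] runs].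
split=> //; rewrite q_def erase_node; congr Node.
by apply: Forall2_map_eq runs _ => u p uts /(IH u uts) [].
Qed.

End SubtreeAutomaton.

Theorem lemma7 (S : graded_alphabet) (t : tree S) :
  in_TSigma t ->
  forall r : tree S, is_subtree r t ->
  forall q : tree (S * nat),
    Delta (subtree_delta t) r q <-> (subtree_states t q /\ erase q = r).
Proof.
move=> t_ranked r _ q; split; first exact: Delta_state_erase.
by case=> st_q <-; apply: Delta_erase_state.
Qed.
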